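(* Let $n\ge 1$, let $G=P_n$ be the path with vertex set $\{1,\dots,n\}$ and edges $\{i,i+1\}$ for $1\le i<n$, and let $C\subseteq V(G)$ be such that no vertex of $V(G)\setminus C$ is isolated. Let $m_1=n-\delta_1+1$, where $\delta_1=\min_{v\in V(G)}|N\langle v\rangle|$. If $\{1,n\}\subseteq C$ or $C$ is a good configuration for $G$, then $\gamma_{\rm gr}(G;C)=m_1$; otherwise $\gamma_{\rm gr}(G;C)=m_1-1$.
   Context: $N\langle v\rangle = N[v]$ (closed neighborhood) if $v\in C$ and $N\langle v\rangle=N(v)$ (open neighborhood) if $v\notin C$. A sequence $(v_1,\dots,v_k)$ of distinct vertices is legal if $N\langle v_i\rangle\setminus\bigcup_{j<i}N\langle v_j\rangle\neq\emptyset$ for all $i\ge 2$, and dominating if $\bigcup_j N\langle v_j\rangle=V$; $\gamma_{\rm gr}(G;C)$ is the maximum length of a legal dominating sequence. Good configuration (defined for a path with vertices $a_1,\dots,a_n$ in order, applied to $C\cap\{a_1,\dots,a_n\}$; isolated vertices outside $C$ are allowed in this definition): $C$ is a good configuration for the path if (i) $n=1$ and $a_1\in C$; or (ii) $n=2$ and $\{a_1,a_2\}\not\subseteq C$; or (iii) $n\ge 3$ and either $a_1\notin C$ and $C$ is a good configuration for the subpath $(a_3,\dots,a_n)$, or $a_n\notin C$ and $C$ is a good configuration for the subpath $(a_1,\dots,a_{n-2})$. *)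

From mathcomp Require Import all_boot.
Set Implicit Arguments. Unset Strict Implicit. Unset Printing Implicit Defensive.

Section GrundyTotal.
Variable V : finType.
Variable adj : rel V.
Variable C : {set V}.

Definition open_nbhd (v : V) : {set V} := [set u | adj v u].
Definition closed_nbhd (v : V) : {set V} := v |: open_nbhd v.

Definition nbhdC (v : V) : {set V} :=
  if v \in C then closed_nbhd v else open_nbhd v.

Definition covered (s : seq V) : {set V} := \bigcup_(v <- s) nbhdC v.

Definition legal_seq (s : seq V) : Prop :=
  uniq s /\
  forall (i : nat) (x0 : V), 0 < i < size s ->
    nbhdC (nth x0 s i) :\: covered (take i s) != set0.

Definition dominating_seq (s : seq V) : Prop := covered s = [set: V].

Definition is_gamma_gr (k : nat) : Prop :=
  (exists s, legal_seq s /\ dominating_seq s /\ size s = k) /\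
  (forall s, legal_seq s -> dominating_seq s -> size s <= k).

Definition delta1 : nat := \big[minn/#|V|]_(v : V) #|nbhdC v|.

(* good configuration for a path with vertices a_1,...,a_n in order *)
Fixpoint good_aux (fuel : nat) (s : seq V) : bool :=
  match fuel with
  | 0 => false
  | fuel'.+1 =>
    match s with
    | [::] => false
    | [:: a] => a \in C
    | [:: a; b] => ~~ ((a \in C) && (b \in C))
    | a :: _ :: rest =>
        ((a \notin C) && good_aux fuel' rest) ||
        ((last a s \notin C) && good_aux fuel' (take (size s - 2) s))
    end
  end.

Definition good_config (s : seq V) : bool := good_aux (size s) s.

End GrundyTotal.

(* the path P_n on vertices 'I_n (vertex i+1 of the paper is i here) *)
Definition path_adj (n : nat) : rel 'I_n :=
  fun u v => ((val u).+1 == val v) || ((val v).+1 == val u).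

From mathcomp Require Import all_boot zify.
Set Implicit Arguments. Unset Strict Implicit. Unset Printing Implicit Defensive.

(* A legal sequence has at most n vertices, and it has exactly n when every vertex footprints
   exactly one new vertex; call such an ordering of a vertex set S (footprints counted inside S)
   a legal ordering of S.  For a segment of the path with an end vertex e outside C, N<e> meets
   the segment only in the neighbour e' of e, and only e' dominates e; hence e, e' can be moved
   to the two ends of a legal ordering, and the segment has one iff the segment without e, e'
   has one.  If both ends of a segment of at least two vertices are in C, every vertex has two
   N<.>-neighbours in the segment, so none exists.  This is exactly the recursion defining good
   configurations.  A legal ordering of P_n forces a vertex with |N<v>| = 1, so then
   gamma_gr = n = m1; otherwise the vertices 1, ..., n-1 in order still give a legal dominating
   sequence, and gamma_gr = n - 1, which is m1 or m1 - 1 according as delta_1 = 2 (both ends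
   in C) or delta_1 = 1. *)

Section LegalFrom.
Variables (V : finType) (F : V -> {set V}).

Definition cover (s : seq V) : {set V} := \bigcup_(v <- s) F v.

Lemma cover_nil : cover [::] = set0. Proof. exact: big_nil. Qed.

Lemma cover_cons w s : cover (w :: s) = F w :|: cover s.
Proof. exact: big_cons. Qed.

Lemma mem_cover x s : reflect (exists2 w, w \in s & x \in F w) (x \in cover s).
Proof. by rewrite /cover bigcup_seq; apply: (iffP bigcupP). Qed.

Lemma mem_of_subsetU1 (A B : {set V}) x : A \subset x |: B -> ~~ (A \subset B) -> x \in A.
Proof.
move=> /subsetP AxB /subsetPn [y Ay yB].
by have := AxB y Ay; rewrite in_setU1 (negbTE yB) orbF => /eqP <-.
Qed.

Fixpoint legal_from (c : {set V}) (s : seq V) : bool :=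
  if s is w :: s' then ~~ (F w \subset c) && legal_from (c :|: F w) s' else true.

Lemma legal_fromP c s :
  reflect (forall i x0, i < size s -> ~~ (F (nth x0 s i) \subset c :|: cover (take i s)))
          (legal_from c s).
Proof.
elim: s c => [|w s IH] c /=; first by apply: ReflectT.
apply: (iffP andP) => [[Fw /IH Hs] [|i] x0 /= lt_i|H].
- by rewrite cover_nil setU0.
- by rewrite cover_cons setUA; apply: Hs.
split; first by have := H 0 w isT; rewrite cover_nil setU0.
by apply/IH => i x0 lt_i; have := H i.+1 x0 lt_i; rewrite /= cover_cons setUA.
Qed.

Lemma legal_from_subset (c c' : {set V}) s : c' \subset c -> legal_from c s -> legal_from c' s.
Proof.
elim: s c c' => [|w s IH] c c' //= sub_c /andP [Fw Hs].
rewrite (contra (fun h => subset_trans h sub_c) Fw) /=.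
by apply: IH Hs; apply: setSU.
Qed.

Lemma legal_from_mem (c : {set V}) s w : legal_from c s -> w \in s -> ~~ (F w \subset c).
Proof.
elim: s c => [|u s IH] c //= /andP [Fu Hs]; rewrite in_cons => /predU1P [-> //|ws].
by apply: contra (IH _ Hs ws) => /subset_trans; apply; apply: subsetUl.
Qed.

Lemma legal_from_uniq c s : legal_from c s -> uniq s.
Proof.
elim: s c => [|w s IH] c //= /andP [_ Hs]; rewrite (IH _ Hs) andbT.
by apply/negP => /(legal_from_mem Hs); rewrite subsetUr.
Qed.

Lemma legal_from_card c s : legal_from c s -> #|c| + size s <= #|c :|: cover s|.
Proof.
elim: s c => [|w s IH] c /=; first by rewrite cover_nil setU0 addn0.
case/andP=> Fw /IH; rewrite cover_cons setUA /= addnS; apply: leq_trans.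
rewrite ltn_add2r; apply: proper_card; rewrite properUl //.
Qed.

Lemma legal_from_size c s : legal_from c s -> size s <= #|~: c|.
Proof.
move/legal_from_card; have := cardsC c; have := max_card (c :|: cover s); lia.
Qed.

Lemma legal_from_rem c s u : legal_from c s -> legal_from c (rem u s).
Proof.
elim: s c => [|w s IH] c //= /andP [Fw Hs]; case: eqP => _.
  by apply: legal_from_subset Hs; apply: subsetUl.
by rewrite /= Fw IH.
Qed.

Lemma legal_from_setU1 c s x :
  (forall w, w \in s -> x \notin F w) -> legal_from c s -> legal_from (x |: c) s.
Proof.
elim: s c => [|w s IH] c //= xF /andP [Fw Hs].
have xFw : x \notin F w by apply: xF; rewrite mem_head.
apply/andP; split.
  apply: contra Fw => /subsetP sub; apply/subsetP => y Fy.
  by have := sub y Fy; rewrite in_setU1 => /predU1P [yx|//]; rewrite -yx Fy in xFw.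
rewrite -setUA; apply: IH => [v vs|//]; apply: xF; exact: mem_behead.
Qed.

Lemma legal_from_rem_pendant c s e e' :
  legal_from c s -> e \in s -> F e \subset e' |: c -> legal_from (e' |: c) (rem e s).
Proof.
elim: s c => [|w s IH] c //= /andP [Fw Hs]; rewrite in_cons.
have [<- _ Fe|ne_we /= es Fe] := eqVneq w e.
  apply: legal_from_subset Hs; rewrite setUC setUS // sub1set.
  exact: mem_of_subsetU1 Fe Fw.
apply/andP; split.
  apply: contra (legal_from_mem Hs es) => Fw'; apply: (subset_trans Fe).
  by rewrite subUset subsetUl sub1set in_setU (mem_of_subsetU1 Fw' Fw) orbT.
rewrite -setUA; apply: IH => //.
by apply: subset_trans Fe _; rewrite setUS // subsetUl.
Qed.

Lemma legal_from_rcons c s w :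
  legal_from c (rcons s w) = legal_from c s && ~~ (F w \subset c :|: cover s).
Proof.
elim: s c => [|u s IH] c /=; first by rewrite cover_nil setU0 andbT.
by rewrite IH cover_cons setUA andbA.
Qed.

(* Footprints are counted inside [S] only: the vertices outside [S] start out dominated. *)
Definition legal_ordering (S : {set V}) : Prop :=
  exists2 s, s =i S & legal_from (~: S) s.

Lemma legal_ordering0 : legal_ordering set0.
Proof. by exists [::] => // x; rewrite inE. Qed.

Lemma legal_ordering1 a : legal_ordering [set a] <-> a \in F a.
Proof.
split=> [[s sa Hs]|Faa].
  have /subsetPn [x Fx] : ~~ (F a \subset ~: [set a]).
    by apply: legal_from_mem Hs _; rewrite sa set11.
  by rewrite !inE negbK => /eqP xa; move: Fx; rewrite xa.
exists [:: a] => [x|]; first by rewrite !inE.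
by rewrite /= andbT; apply/subsetPn; exists a; rewrite ?inE ?eqxx.
Qed.

Lemma legal_ordering_leaf S :
  legal_ordering S -> S != set0 -> exists2 w, w \in S & #|F w :&: S| <= 1.
Proof.
case=> [[|w s] sS Hs /set0Pn [x]]; first by rewrite -sS.
have wS : w \in S by rewrite -sS mem_head.
exists w => //; rewrite leqNgt; apply/negP => FwS.
have /card_uniqP size_s := legal_from_uniq Hs.
rewrite (eq_card sS) in size_s.
move: Hs => /= /andP [_ /legal_from_card card_s].
have := cardsUI (~: S) (F w); rewrite setIC -setDE.
have := cardsID S (F w); have := cardsC S; have := max_card (~: S :|: F w :|: cover s).
move: size_s card_s FwS => /=; lia.
Qed.

(* Only [e'] can footprint [e] and [e] can footprint nothing but [e'], so any legal
   ordering can be rearranged to start with [e] and end with [e']. *)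
Section Pendant.
Variables (S : {set V}) (e e' : V).
Hypotheses (eS : e \in S) (FeS : F e :&: S = [set e']).
Hypotheses (Fe'e : e \in F e') (Fee : e \notin F e).
Hypothesis only_e' : forall w, w \in S -> e \in F w -> w = e'.

Let e'FeS : (e' \in F e) && (e' \in S).
Proof. by rewrite -in_setI FeS set11. Qed.

Let ne_ee' : e != e'.
Proof. by apply/eqP => ee'; move: Fee; rewrite {2}ee' Fe'e. Qed.

Let Fe_sub : F e \subset e' |: ~: S.
Proof.
apply/subsetP => x Fx; rewrite !inE; have [xS|] := boolP (x \in S); last by rewrite orbT.
have : x \in F e :&: S by rewrite inE Fx.
by rewrite FeS inE orbF.
Qed.

Lemma legal_ordering_pendant : legal_ordering S <-> legal_ordering (S :\ e :\ e').
Proof.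
have [e'Fe e'S] := andP e'FeS.
split=> [[s sS Hs]|[s sS Hs]].
  have us := legal_from_uniq Hs.
  have mem_s x : (x \in rem e' (rem e s)) = [&& x != e', x != e & x \in S].
    by rewrite (mem_rem_uniq _ (rem_uniq _ us)) inE (mem_rem_uniq _ us) inE sS.
  exists (rem e' (rem e s)) => [x|]; first by rewrite mem_s !inE.
  apply: (@legal_from_subset (e |: (e' |: ~: S))).
    by apply/subsetP => x; rewrite !inE; case: (x == e); case: (x == e').
  apply: legal_from_setU1 => [w|].
    rewrite mem_s => /and3P [ne_we' _ wS].
    by apply: contra ne_we' => /(only_e' wS) ->.
  by apply/legal_from_rem/legal_from_rem_pendant; rewrite ?sS.
exists (e :: rcons s e') => [x|].
  rewrite in_cons mem_rcons in_cons sS !inE.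
  have [->|_] := eqVneq x e; first by rewrite eS.
  by have [->|] := eqVneq x e'; rewrite ?e'S.
rewrite /= legal_from_rcons; apply/and3P; split.
- by apply/subsetPn; exists e'; rewrite ?inE ?negbK.
- apply: legal_from_subset Hs; apply: (@subset_trans _ _ (e' |: ~: S)).
    by rewrite subUset subsetU1 Fe_sub.
  by apply/subsetP => x; rewrite !inE => /orP [->|/negbTE ->]; rewrite ?andbF.
apply/subsetPn; exists e => //; rewrite !inE eS (negbTE Fee) /=.
apply/negP => /mem_cover [w]; rewrite sS !inE => /and3P [ne_we' _ wS] /(only_e' wS).
by move/eqP: ne_we'.
Qed.
End Pendant.
End LegalFrom.

Section GoodConfig.
Variables (V : finType) (C : {set V}).

Lemma good_aux_fuel f g s : size s <= f -> size s <= g -> good_aux C f s = good_aux C g s.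
Proof.
elim: f g s => [|f IH] [|g] [|a [|b [|c r]]] //= sf sg.
by rewrite (IH g) 1?(IH g) //= ?size_takel //=; lia.
Qed.

Lemma good_configE f s : size s <= f -> good_aux C f s = good_config C s.
Proof. by move=> sf; apply: good_aux_fuel. Qed.

Definition good_config0 (s : seq V) : bool := (s == [::]) || good_config C s.

Lemma good_config_cons2 a b r p y z : a :: b :: r = p ++ [:: y; z] ->
  good_config C (a :: b :: r) = (a \notin C) && good_config0 r || (z \notin C) && good_config0 p.
Proof.
case: r => [|c r] E.
  have [-> ->] : p = [::] /\ z = b.
    by case: p E => [[_ ->]|q [|? [|? ?]]] //.
  by rewrite /good_config0 /good_config /= negb_and !andbT.
have size_p : size p = (size r).+1.
  by move/(congr1 size): E; rewrite size_cat /=; lia.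
have unfold_aux f : good_aux C f.+1 [:: a, b, c & r] =
    (a \notin C) && good_aux C f (c :: r)
    || (last a [:: a, b, c & r] \notin C) && good_aux C f (take (size r).+1 [:: a, b, c & r]).
  by [].
have last_z : last a [:: a, b, c & r] = z by rewrite E last_cat.
have take_p : take (size r).+1 [:: a, b, c & r] = p by rewrite E -size_p take_size_cat.
rewrite /good_config unfold_aux last_z take_p !good_configE ?size_p //.
by rewrite /good_config0; case: (p) size_p.
Qed.
End GoodConfig.

Section Graph.
Variables (V : finType) (adj : rel V) (C : {set V}).
Notation N := (nbhdC adj C).

Lemma in_nbhdC v x : (x \in N v) = (v \in C) && (x == v) || adj v x.
Proof. by rewrite /nbhdC /closed_nbhd /open_nbhd; case: (v \in C); rewrite !inE. Qed.

Lemma nbhdC_neq0 : (forall v, v \notin C -> open_nbhd adj v != set0) -> forall v, N v != set0.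
Proof.
move=> hC v; have [vC|vC] := boolP (v \in C); last by rewrite /nbhdC (negbTE vC) hC.
by apply/set0Pn; exists v; rewrite in_nbhdC vC eqxx.
Qed.

Lemma legal_seqE s : (forall v, N v != set0) -> legal_seq adj C s <-> legal_from N set0 s.
Proof.
move=> N0; rewrite /legal_seq; split=> [[_ Hs]|Hs].
  apply/legal_fromP => -[|i] x0 lt_i; first by rewrite take0 cover_nil setU0 subset0 N0.
  by rewrite set0U -setD_eq0 Hs.
split; first exact: legal_from_uniq Hs.
by move=> i x0 /andP [_ lt_i]; rewrite setD_eq0 -(set0U (covered _ _ _)); apply/legal_fromP.
Qed.

Lemma delta1_le v : delta1 adj C <= #|N v|.
Proof.
rewrite /delta1; elim: (index_enum V) (mem_index_enum v) => // u r IH.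
rewrite big_cons in_cons => /predU1P [<-|/IH]; first exact: geq_minl.
exact/leq_trans/geq_minr.
Qed.

Lemma delta1_ge k : k <= #|V| -> (forall v, k <= #|N v|) -> k <= delta1 adj C.
Proof.
by move=> kV kN; apply: (big_ind (fun d => k <= d)) => // d d' kd kd'; rewrite leq_min kd.
Qed.

Lemma delta1_eq1 v : (forall v, N v != set0) -> #|N v| <= 1 -> delta1 adj C = 1.
Proof.
move=> N0 Nv; apply/eqP; rewrite eqn_leq (leq_trans (delta1_le v)) //=.
by apply: delta1_ge => [|u]; [apply/card_gt0P; exists v | rewrite card_gt0].
Qed.

Lemma dominating_of_size s : (forall v, N v != set0) -> legal_seq adj C s ->
  size s = #|V| -> dominating_seq adj C s.
Proof.
move=> N0 /(legal_seqE _ N0) /legal_from_card; rewrite cards0 set0U => card_s size_s.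
by apply/eqP; rewrite eqEcard subsetT cardsT -size_s.
Qed.

Lemma legal_ordering_setTP : (forall v, N v != set0) ->
  legal_ordering N setT <-> exists2 s, legal_seq adj C s & size s = #|V|.
Proof.
move=> N0; rewrite /legal_ordering setCT; split=> [[s sT Hs]|[s /(legal_seqE _ N0) Hs size_s]].
  exists s; first exact/legal_seqE.
  by rewrite -(card_uniqP (legal_from_uniq Hs)) -cardsT; apply: eq_card sT.
exists s => //; apply/subset_cardP.
  by rewrite (card_uniqP (legal_from_uniq Hs)) size_s cardsT.
exact/subsetP.
Qed.

Lemma is_gamma_gr_card : (forall v, N v != set0) -> legal_ordering N setT ->
  is_gamma_gr adj C #|V|.
Proof.
move=> N0 /(legal_ordering_setTP N0) [s Hs size_s]; split.
  by exists s; split=> //; split=> //; apply: dominating_of_size.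
by move=> s' /(legal_seqE _ N0) /legal_from_size; rewrite setC0 cardsT.
Qed.

Lemma is_gamma_gr_card_pred s : (forall v, N v != set0) -> ~ legal_ordering N setT ->
  legal_seq adj C s -> dominating_seq adj C s -> size s = #|V|.-1 ->
  is_gamma_gr adj C #|V|.-1.
Proof.
move=> N0 notT Hs Ds size_s; split; first by exists s.
move=> s' Hs' _; have := Hs'; move/(legal_seqE _ N0)/legal_from_size.
rewrite setC0 cardsT leq_eqVlt => /orP [/eqP size_s'|]; last by case: #|V|.
by case: notT; apply/legal_ordering_setTP => //; exists s'.
Qed.

Hypotheses (adj_sym : symmetric adj) (adj_irr : irreflexive adj).

Lemma legal_ordering_pendant_nbhdC (S : {set V}) e e' : e \notin C -> e \in S ->
  open_nbhd adj e :&: S = [set e'] -> legal_ordering N S <-> legal_ordering N (S :\ e :\ e').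
Proof.
move=> eC eS NeS; have Ne : N e = open_nbhd adj e by rewrite /nbhdC (negbTE eC).
have /setIP [adj_ee' _] : e' \in open_nbhd adj e :&: S by rewrite NeS set11.
rewrite inE in adj_ee'.
apply: legal_ordering_pendant; rewrite ?Ne //.
- by rewrite in_nbhdC adj_sym adj_ee' orbT.
- by rewrite inE adj_irr.
move=> w wS; rewrite in_nbhdC => /orP [/andP [wC /eqP ew]|adj_we].
  by move: eC; rewrite ew wC.
have : w \in open_nbhd adj e :&: S by rewrite !inE adj_sym adj_we.
by rewrite NeS inE => /eqP.
Qed.
End Graph.

Lemma cons2_cat2 (T : Type) (a b : T) r : exists p y z, [:: a, b & r] = p ++ [:: y; z].
Proof.
elim: r a b => [|c r IH] a b; first by exists [::], a, b.
by have [p [y [z ->]]] := IH b c; exists (a :: p), y, z.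
Qed.

Section Path.
Variables (n : nat) (C : {set 'I_n}).
Notation adj := (@path_adj n).
Notation N := (nbhdC adj C).

Lemma path_adj_sym : symmetric adj.
Proof. by move=> u v; rewrite /path_adj orbC. Qed.

Lemma path_adj_irr : irreflexive adj.
Proof. by move=> u; rewrite /path_adj orbb gtn_eqF. Qed.

Lemma in_nbhdC_path (v x : 'I_n) : (x \in N v) =
  (v \in C) && (x == v :> nat) || (v.+1 == x) || (x.+1 == v).
Proof. by rewrite in_nbhdC /path_adj orbA. Qed.

Definition seg (l m : nat) : {set 'I_n} := [set x : 'I_n | l <= x < l + m].

Lemma seg0 l : seg l 0 = set0.
Proof. by apply/setP => x; rewrite !inE addn0; case: leqP. Qed.

Lemma seg1 l (a : 'I_n) : val a = l -> seg l 1 = [set a].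
Proof. by move=> va; apply/setP => x; rewrite !inE -val_eqE /= va; lia. Qed.

Lemma seg_pendant_left l m (a b : 'I_n) : 1 < m -> val a = l -> val b = l.+1 ->
  open_nbhd adj a :&: seg l m = [set b] /\ seg l m :\ a :\ b = seg (l + 2) (m - 2).
Proof.
by move=> m2 va vb; split; apply/setP => x; rewrite !inE /path_adj -!val_eqE /= va vb; lia.
Qed.

Lemma seg_pendant_right l m (y z : 'I_n) : 1 < m -> val y = l + m - 2 -> val z = l + m - 1 ->
  open_nbhd adj z :&: seg l m = [set y] /\ seg l m :\ z :\ y = seg l (m - 2).
Proof.
by move=> m2 vy vz; split; apply/setP => x; rewrite !inE /path_adj -!val_eqE /= vy vz; lia.
Qed.

Lemma run_cat l (p q : seq 'I_n) : map val (p ++ q) = iota l (size (p ++ q)) ->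
  map val p = iota l (size p) /\ map val q = iota (l + size p) (size q).
Proof.
rewrite map_cat size_cat iotaD => /eqP; rewrite eqseq_cat ?size_map ?size_iota //.
by case/andP=> /eqP -> /eqP ->.
Qed.

Lemma card_nbhdC_seg l m (a z : 'I_n) : 1 < m -> val a = l -> val z = l + m - 1 ->
  a \in C -> z \in C -> forall w, w \in seg l m -> 1 < #|N w :&: seg l m|.
Proof.
move=> m2 /= va vz aC zC w; rewrite inE => /andP [lw wlm]; apply/card_gt1P.
have ltz := ltn_ord z.
have [wl|wl] := eqVneq (w : nat) l.
  have wC : w \in C by rewrite (_ : w = a) //; apply/val_inj; rewrite /= wl va.
  have hs : w.+1 < n by lia.
  by exists w, (Ordinal hs); rewrite !inE !in_nbhdC_path -!val_eqE /= wC; split; lia.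
have hp : w.-1 < n by have := ltn_ord w; lia.
have [wr|wr] := eqVneq (w : nat) (l + m - 1).
  have wC : w \in C by rewrite (_ : w = z) //; apply/val_inj; rewrite /= wr vz.
  by exists w, (Ordinal hp); rewrite !inE !in_nbhdC_path -!val_eqE /= wC; split; lia.
have hs : w.+1 < n by lia.
exists (Ordinal hp), (Ordinal hs); rewrite !inE !in_nbhdC_path -!val_eqE /=.
by case: (w \in C); split; lia.
Qed.

Lemma good_config0_legal_ordering l (t : seq 'I_n) : map val t = iota l (size t) ->
  good_config0 C t <-> legal_ordering N (seg l (size t)).
Proof.
have [m] := ubnP (size t); elim: m => // m IH in l t *.
case: t => [|a [|b r]] /= lt_m run_t.
- by rewrite seg0; split=> // _; apply: legal_ordering0.
- case: run_t => va; rewrite (seg1 va) legal_ordering1 in_nbhdC path_adj_irr eqxx andbT orbF.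
  by rewrite /good_config0 /good_config.
have [p [y [z Et]]] := cons2_cat2 a b r.
have size_p : size p = size r by move/(congr1 size): Et; rewrite size_cat /= addn2 => -[].
have [[va vb] run_r] := run_cat (p := [:: a; b]) (q := r) run_t.
have run_pyz : map val (p ++ [:: y; z]) = iota l (size (p ++ [:: y; z])) by rewrite -Et.
have [run_p [vy vz]] := run_cat run_pyz.
set S := seg l (size r).+2.
have aS : a \in S by rewrite inE va; lia.
have left_iff : a \notin C -> good_config0 C r <-> legal_ordering N S.
  move=> aC; have [NaS Sab] := seg_pendant_left (m := (size r).+2) isT va vb.
  rewrite (legal_ordering_pendant_nbhdC path_adj_sym path_adj_irr aC aS NaS) Sab.
  by rewrite !subSS subn0; apply: IH => //; lia.
have right_iff : z \notin C -> good_config0 C p <-> legal_ordering N S.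
  move=> zC; have vy' : y = l + (size r).+2 - 2 :> nat by rewrite vy size_p; lia.
  have vz' : z = l + (size r).+2 - 1 :> nat by rewrite vz size_p; lia.
  have zS : z \in S by rewrite inE vz'; lia.
  have [NzS Szy] := seg_pendant_right (m := (size r).+2) isT vy' vz'.
  rewrite (legal_ordering_pendant_nbhdC path_adj_sym path_adj_irr zC zS NzS) Szy.
  by rewrite !subSS subn0 -size_p; apply: IH => //; lia.
rewrite /good_config0 /= (good_config_cons2 _ Et).
have [aC|aC] := boolP (a \in C); have [zC|zC] := boolP (z \in C) => /=.
- split=> // /legal_ordering_leaf [|w wS]; first by apply/set0Pn; exists a.
  have vz' : z = l + (size r).+2 - 1 :> nat by rewrite vz size_p; lia.
  by rewrite leqNgt (card_nbhdC_seg (m := (size r).+2) isT va vz' aC zC wS).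
- exact: right_iff.
- by rewrite orbF; apply: left_iff.
by split=> [/orP [/(left_iff aC)|/(right_iff zC)] //|/(left_iff aC) ->].
Qed.

Lemma mem_run l (t : seq 'I_n) x :
  map val t = iota l (size t) -> (x \in t) = (l <= x < l + size t).
Proof. by move=> run_t; rewrite -(mem_map val_inj) run_t mem_iota. Qed.

Lemma legal_from_run l (t : seq 'I_n) (c : {set 'I_n}) :
  map val t = iota l (size t) -> l + size t < n -> (forall x, x \in c -> x <= l) ->
  legal_from N c t.
Proof.
elim: t l c => [|a t IH] l c //= [va run_t] lt_n c_le.
have lt_l1 : l.+1 < n by lia.
apply/andP; split.
  apply/subsetPn; exists (Ordinal lt_l1); first by rewrite in_nbhdC_path va eqxx orbT.
  by apply/negP => /c_le /=; lia.
apply: (IH l.+1) => // [|x]; first by lia.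
by rewrite in_setU in_nbhdC_path va => /orP [/c_le|]; case: (a \in C) => /=; lia.
Qed.

Lemma seg_all : seg 0 n = setT.
Proof. by apply/setP => x; rewrite !inE ltn_ord. Qed.

Lemma legal_ordering_path : 0 < n -> legal_ordering N setT <-> good_config C (enum 'I_n).
Proof.
move=> n0; have run_enum : map val (enum 'I_n) = iota 0 (size (enum 'I_n)).
  by rewrite val_enum_ord size_enum_ord.
rewrite -seg_all -[n in seg 0 n]size_enum_ord -(good_config0_legal_ordering run_enum).
by rewrite /good_config0 -size_eq0 size_enum_ord eqn0Ngt n0.
Qed.

Let prefix := take n.-1 (enum 'I_n).

Let run_prefix : map val prefix = iota 0 (size prefix).
Proof.
rewrite map_take val_enum_ord take_iota size_takel ?size_enum_ord ?leq_pred //.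
by rewrite (minn_idPl (leq_pred n)).
Qed.

Let size_prefix : size prefix = n.-1.
Proof. by rewrite size_takel // size_enum_ord leq_pred. Qed.

Lemma dominating_prefix : 1 < n -> 2 < n \/ (forall v : 'I_n, v = 0 :> nat -> v \in C) ->
  dominating_seq adj C prefix.
Proof.
move=> n1 n2_or_0C; apply/setP => x; rewrite inE; apply/mem_cover.
have in_prefix (w : 'I_n) : (w \in prefix) = (w < n.-1).
  by rewrite (mem_run w run_prefix) size_prefix.
have [x0|x_gt0] := posnP x; last first.
  have lt_xp : x.-1 < n by have := ltn_ord x; lia.
  by exists (Ordinal lt_xp); rewrite ?in_prefix ?in_nbhdC_path /=; have := ltn_ord x; lia.
case: n2_or_0C => [n2|/(_ x x0) xC].
  by exists (Ordinal n1); rewrite ?in_prefix ?in_nbhdC_path /= ?x0; lia.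
by exists x; rewrite ?in_prefix ?in_nbhdC_path ?xC ?eqxx //= x0; lia.
Qed.

Lemma path_nontrivial : (forall v : 'I_n, v \notin C -> open_nbhd adj v != set0) ->
  0 < n -> ~ legal_ordering N setT -> 1 < n.
Proof.
move=> hC n0 notT; rewrite ltnNge; apply/negP => n_le1; apply: notT.
pose a := Ordinal n0.
have -> : [set: 'I_n] = [set a].
  by apply/setP => x; rewrite !inE -val_eqE /=; have := ltn_ord x; lia.
rewrite legal_ordering1 in_nbhdC eqxx andbT path_adj_irr orbF.
apply/negPn/negP => /hC /set0Pn [x]; rewrite inE /path_adj /=; have := ltn_ord x; lia.
Qed.

Lemma is_gamma_gr_path_not_legal : (forall v : 'I_n, v \notin C -> open_nbhd adj v != set0) ->
  1 < n -> ~ legal_ordering N setT -> is_gamma_gr adj C n.-1.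
Proof.
move=> hC n1 notT; have N0 := nbhdC_neq0 hC.
have n2_or_0C : 2 < n \/ (forall v : 'I_n, v = 0 :> nat -> v \in C).
  case: (ltnP 2 n) => [|n_le2]; [by left | right => v v0].
  (* For n = 2, an end vertex outside C reduces P_2 to the empty segment. *)
  apply/negPn/negP => vC; apply: notT.
  have [NvS Svb] := seg_pendant_left (l := 0) (m := n) (b := Ordinal n1) n1 v0 erefl.
  have vS : v \in seg 0 n by rewrite inE add0n ltn_ord.
  rewrite -seg_all (legal_ordering_pendant_nbhdC path_adj_sym path_adj_irr vC vS NvS) Svb.
  by rewrite (_ : n - 2 = 0) ?seg0; [apply: legal_ordering0 | lia].
rewrite -[n in n.-1]card_ord; apply: (is_gamma_gr_card_pred (s := prefix)) => //.
- apply/legal_seqE => //; apply: legal_from_run run_prefix _ _ => [|x]; last by rewrite inE.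
  by rewrite size_prefix; lia.
- exact: dominating_prefix.
by rewrite size_prefix card_ord.
Qed.

Lemma card_nbhdC_path_end (v : 'I_n) : v \notin C -> (val v == 0) || (val v == n.-1) ->
  #|N v| <= 1.
Proof.
move=> vC v_end; apply/card_le1_eqP => x y; rewrite !in_nbhdC_path (negbTE vC) /=.
move=> x_adj y_adj; apply/val_inj; move: v_end => /=.
by have := ltn_ord x; have := ltn_ord y; lia.
Qed.

Lemma delta1_path_ends : 1 < n -> (forall v : 'I_n, (val v == 0) || (val v == n.-1) -> v \in C) ->
  delta1 adj C = 2.
Proof.
move=> n1 ends; have n0 := ltnW n1; have lt_pred : n.-1 < n by lia.
pose a := Ordinal n0; pose b := Ordinal n1; pose z := Ordinal lt_pred.
have aC : a \in C by apply: ends; rewrite eqxx.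
have zC : z \in C by apply: ends; rewrite eqxx orbT.
apply/eqP; rewrite eqn_leq; apply/andP; split.
  apply: leq_trans (delta1_le _ _ a) _; rewrite -(cards2 a b) subset_leq_card //.
  by apply/subsetP => x; rewrite in_nbhdC_path !inE -!val_eqE /=; lia.
apply: delta1_ge => [|w]; first by rewrite card_ord.
have wS : w \in seg 0 n by rewrite seg_all inE.
have := card_nbhdC_seg (m := n) n1 (erefl : val a = 0) _ aC zC wS.
by rewrite seg_all setIT; apply; rewrite /=; lia.
Qed.
End Path.

Theorem proposition3 (n : nat) (hn : 1 <= n) (C : {set 'I_n})
  (hC : forall v : 'I_n, v \notin C -> open_nbhd (@path_adj n) v != set0) :
  let m1 := n - delta1 (@path_adj n) C + 1 in
  if [forall v : 'I_n, ((val v == 0) || (val v == n.-1)) ==> (v \in C)]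
     || good_config C (enum 'I_n)
  then is_gamma_gr (@path_adj n) C m1
  else is_gamma_gr (@path_adj n) C (m1 - 1).
Proof.
move=> m1; have N0 := nbhdC_neq0 hC.
have [good|not_good] := boolP (good_config C (enum 'I_n)); rewrite ?orbT ?orbF.
  have legal_all : legal_ordering (nbhdC (@path_adj n) C) setT by apply/legal_ordering_path.
  have [|w _] := legal_ordering_leaf legal_all; first by apply/set0Pn; exists (Ordinal hn).
  rewrite setIT => /(delta1_eq1 N0) d1; rewrite /m1 d1 subnK //.
  by rewrite -[n in is_gamma_gr _ _ n]card_ord; apply: is_gamma_gr_card.
have not_legal : ~ legal_ordering (nbhdC (@path_adj n) C) setT.
  by move/(legal_ordering_path C hn); apply/negP.
have n1 := path_nontrivial hC hn not_legal.
have gamma := is_gamma_gr_path_not_legal hC n1 not_legal.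
case: ifP => [/forallP ends | /forallPn [v]].
  rewrite /m1 (delta1_path_ends n1 (fun v => implyP (ends v))).
  by have -> : n - 2 + 1 = n.-1 by lia.
rewrite negb_imply => /andP [v_end vC].
by rewrite /m1 (delta1_eq1 N0 (card_nbhdC_path_end vC v_end)) subnK // subn1.
Qed.
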